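(* Let $p$ be a monic polynomial of degree $d$, let $\alpha\in\mathbb{C}$, and set $\tilde p(Z)=(Z-\alpha)p(Z)$. (1) For a point $\underline z=(z_1,\dots,z_d,\alpha)\in\mathbb{C}^{d+1}$ with pairwise distinct entries, the Jacobi matrix of $W_{\tilde p}$ at $\underline z$ has the block form $$DW_{\tilde p}(\underline z)=\begin{pmatrix} DW_p(\underline z') & *\\ 0_{1\times d} & \lambda\end{pmatrix},$$ where $\underline z'=(z_1,\dots,z_d)$, $*$ is some $d\times1$ column, and $\lambda=1-\dfrac{p(\alpha)}{\prod_{j=1}^d(\alpha-z_j)}$. (2) If $q\in\mathbb{C}^d$ is a periodic point of $W_p$ of period $n$ such that all eigenvalues of $D(W_p^{\circ n})(q)$ have absolute value strictly less than $1$, then for all $\alpha$ with $|\alpha|$ sufficiently large, $\tilde q=(q,\alpha)\in\mathbb{C}^{d+1}$ is a periodic point of $W_{\tilde p}$ of period $n$ and all eigenvalues of $D(W_{\tilde p}^{\circ n})(\tilde q)$ have absolute value strictly less than $1$.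
   Context: For a monic polynomial $p\in\mathbb{C}[Z]$ of degree $d$, the Weierstrass map $W_p$ is the partially defined map $\mathbb{C}^d\setminus\Delta\to\mathbb{C}^d$, $\underline z\mapsto \underline z'$ with $z'_k=z_k-\dfrac{p(z_k)}{\prod_{j\ne k}(z_k-z_j)}$, where $\Delta=\{\underline z\in\mathbb{C}^d: z_j=z_k\text{ for some }j<k\}$. *)

From mathcomp Require Import all_boot all_order all_algebra.
From mathcomp Require Import complex.
From mathcomp Require Import all_classical all_reals all_analysis.
Import numFieldNormedType.Exports.
Set Implicit Arguments. Unset Strict Implicit. Unset Printing Implicit Defensive.
Import Order.TTheory GRing.Theory Num.Theory.
Local Open Scope ring_scope.

Definition offDiag (K : eqType) (d : nat) (z : 'rV[K]_d) : Prop :=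
  forall j k : 'I_d, j != k -> z 0 j != z 0 k.

(* It is only meaningful off
   Delta; off Delta all denominators are non-zero.  On Delta MathComp's
   convention x / 0 = 0 makes it total, but we never use those values. *)
Definition weierstrass (K : fieldType) (p : {poly K}) (d : nat)
    (z : 'rV[K]_d) : 'rV[K]_d :=
  \row_(k < d) (z 0 k - p.[z 0 k] / \prod_(j < d | j != k) (z 0 k - z 0 j)).

(* Jacobi matrix in the usual convention: entry (i, j) = d f_i / d z_j.
   The library's 'J f z (= lin1_mx ('d f z)) acts on row vectors,
   i.e. is the transpose of the usual Jacobi matrix. *)
Definition jacobi (K : numFieldType) (n : nat) (f : 'rV[K]_n -> 'rV[K]_n)
    (z : 'rV[K]_n) : 'M[K]_n :=
  ('J f z)^T.

(* q is a periodic point of (the partial map) W of (exact, minimal) period n: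
   the orbit q, W q, ..., W^(n-1) q stays off Delta (so the iterates are
   defined), W^n q = q and W^k q <> q for 0 < k < n. *)
Definition periodic_point (K : eqType) (d : nat) (W : 'rV[K]_d -> 'rV[K]_d)
    (q : 'rV[K]_d) (n : nat) : Prop :=
  [/\ (0 < n)%N,
      forall k, (k < n)%N -> offDiag (iter k W q),
      iter n W q = q &
      forall k, (0 < k < n)%N -> iter k W q != q].

Definition attracting (K : numFieldType) (n : nat) (M : 'M[K]_n) : Prop :=
  forall a : K, eigenvalue M a -> `|a| < 1.

From mathcomp Require Import all_boot all_order all_algebra.
From mathcomp Require Import complex.
From mathcomp Require Import all_classical all_reals all_analysis.
Import numFieldNormedType.Exports.
Import Order.TTheory GRing.Theory Num.Theory.
Local Open Scope ring_scope.

(* Write W = W_p on K^d, Wt = W_{(Z - alpha) p} on K^(d+1) and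
   ext y t = (y, t).  Throughout K is any numFieldType; only the final theorem
   specializes to K = R[i].
   - Slice identity: if no y_j equals alpha then Wt (ext y alpha) = ext (W y) alpha,
     because the factor y_j - alpha cancels in the first d coordinates and the last
     coordinate is alpha - 0.  Differentiating along this slice gives the first d
     columns of the Jacobi matrix of Wt, i.e. the blocks DW_p and 0; the last
     diagonal entry is the derivative at alpha of t - (t - alpha) G(t) with
     G = p / prod (t - z_j), namely 1 - G(alpha).  This is part (1).
   - By the chain rule block upper-triangular matrices multiply along an orbit, so
     D(Wt^n)(q, alpha) is block triangular with corner the product of the
     multipliers lambda_k = 1 - p(alpha) / prod (alpha - (W^k q)_j), and its
     eigenvalues are those of D(W^n)(q) together with that product.
   - Since p is monic of degree d, 1 - p(a) / prod (a - w_j) = r(a) / prod (a - w_j)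
     with deg r < d, which is smaller than 1 in modulus once |a| is large; taking
     the largest of the n thresholds along the orbit of q gives part (2). *)

Section Calculus.
Context {K : numFieldType}.
Implicit Types V : normedModType K.

Lemma differentiable_prod V (I : Type) (r : seq I) (P : pred I) (g : I -> V -> K) x :
  (forall i, P i -> differentiable (g i) x) ->
  differentiable (fun y => \prod_(i <- r | P i) g i y) x.
Proof.
move=> dg; rewrite -fct_prodE; elim/big_ind: _ => //.
by move=> f1 f2 df1 df2; exact: differentiableM.
Qed.

Lemma differentiable_horner V (p : {poly K}) (f : V -> K) x :
  differentiable f x -> differentiable (fun y => p.[f y]) x.
Proof.
move=> df; elim/poly_ind: p => [|p c IH].
  by under eq_fun do rewrite horner0; exact: differentiable_cst.
under eq_fun do rewrite hornerMXaddC.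
apply: differentiableD; last exact: differentiable_cst.
exact: differentiableM.
Qed.

Lemma differentiable_row V n (F : 'I_n -> V -> K) x :
  (forall k, differentiable (F k) x) ->
  differentiable (fun y => \row_k F k y : 'rV[K]_n) x.
Proof.
move=> dF; rewrite (_ : (fun y => _) = \sum_(k < n) (fun y => F k y *: delta_mx 0 k)).
  by apply: differentiable_sum => k; exact: differentiableZl.
rewrite fct_sumE; apply/funext => y; rewrite [LHS]row_sum_delta.
by apply: eq_bigr => k _; rewrite mxE.
Qed.

Lemma derive_coord V n (f : V -> 'rV[K]_n) a v i :
  differentiable f a -> ('D_v f a) 0 i = 'D_v (fun y => f y 0 i) a.
Proof.
move=> df.
have @coord : {linear 'rV[K]_n -> K}.
  by exists (fun N : 'rV[K]_n => N 0 i); do 2![eexists]; do ?[constructor];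
     rewrite ?mxE// => ? *; rewrite ?mxE//; move=> ?; rewrite !mxE.
have dcoord : differentiable coord (f a) by exact: differentiable_coord.
rewrite (deriveE _ df) (_ : (fun y => f y 0 i) = coord \o f) //.
rewrite (deriveE _ (differentiable_comp df dcoord)) (diff_comp df dcoord).
by rewrite diff_lin //; exact: coord_continuous.
Qed.

Lemma jacobi_entry n (f : 'rV[K]_n -> 'rV[K]_n) a i j :
  differentiable f a ->
  jacobi f a i j = 'D_(delta_mx 0 j) (fun y => f y 0 i) a.
Proof.
move=> df; rewrite /jacobi mxE -derive_coord // deriveEjacobian //.
by rewrite -(rowE j) [RHS]mxE.
Qed.

Lemma jacobian_comp m n l (g : 'rV[K]_m -> 'rV[K]_n) (f : 'rV[K]_n -> 'rV[K]_l) x :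
  differentiable g x -> differentiable f (g x) ->
  'J (f \o g) x = 'J g x *m 'J f (g x).
Proof.
move=> dg df; have dfg := differentiable_comp dg df.
apply/row_matrixP => i; rewrite !rowE.
rewrite -deriveEjacobian // mulmxA -deriveEjacobian // -deriveEjacobian //.
by rewrite !deriveE // diff_comp.
Qed.

Lemma jacobi_comp n (g f : 'rV[K]_n -> 'rV[K]_n) x :
  differentiable g x -> differentiable f (g x) ->
  jacobi (f \o g) x = jacobi f (g x) *m jacobi g x.
Proof. by move=> dg df; rewrite /jacobi jacobian_comp // trmx_mul. Qed.

Lemma jacobi_id n (x : 'rV[K]_n) : jacobi id x = 1%:M.
Proof.
rewrite /jacobi (_ : 'J id x = 1%:M) ?trmx1 //.
apply/row_matrixP => i; rewrite !rowE mulmx1 -deriveEjacobian //.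
exact: derive_id.
Qed.

Lemma derive_transfer V1 V2 (W : normedModType K) (f : V1 -> W) (g : V2 -> W) a b v w :
  (forall h : K, f (h *: v + a) = g (h *: w + b)) -> 'D_v f a = 'D_w g b.
Proof.
move=> fg; have fab : f a = g b by have := fg 0; rewrite !scale0r !add0r.
rewrite /derive fab.
suff -> : (fun h : K => h^-1 *: ((f \o shift a) (h *: v) - g b)) =
          (fun h => h^-1 *: ((g \o shift b) (h *: w) - g b)) by [].
by apply: funext => h /=; rewrite fg.
Qed.

(* The derivative at a of t - (t - a) G(t) is 1 - G(a): the factor t - a kills
   the contribution of G'(a).  This gives the last diagonal entry in part (1). *)
Lemma derive_vanishing_factor (G : K -> K) a :
  differentiable G a -> 'D_1 (fun t => t - (t - a) * G t) a = 1 - G a.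
Proof.
move=> dG; have dG1 : derivable G a 1 by exact: diff_derivable.
have dlin : derivable (id - cst a) a 1 by apply: derivableB.
rewrite (_ : (fun t => _) = id - (id - cst a) * G) //.
rewrite deriveB ?deriveM ?deriveB //; last exact: derivableM.
have -> : (id - cst a) a = 0 by exact: subrr.
rewrite derive_id derive_cst.
by rewrite scale0r add0r subr0 /GRing.scale /= mulr1.
Qed.
End Calculus.

Lemma differentiable_weierstrass (K : numFieldType) (p : {poly K}) d (z : 'rV[K]_d) :
  offDiag z -> differentiable (@weierstrass K p d) z.
Proof.
move=> oz; apply: differentiable_row => k.
have dcoord j : differentiable (fun y : 'rV[K]_d => y 0 j) z by exact: differentiable_coord.
apply: differentiableB; first exact: dcoord.
apply: differentiableM; first exact: differentiable_horner.
apply: differentiableV.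
  by apply: differentiable_prod => j _; exact: differentiableB.
rewrite prodf_seq_neq0; apply/allP => j _; apply/implyP => jk.
by rewrite subr_eq0 oz // eq_sym.
Qed.

Lemma near_avoid {K : numFieldType} {d : nat} {a : K} {z : 'rV[K]_d} :
  (forall j, z 0 j != a) -> \forall y \near z, forall j : 'I_d, (y : 'rV[K]_d) 0 j != a.
Proof.
move=> za; apply: (@filter_forall _ _ (fun j (y : 'rV[K]_d) => y 0 j != a) (nbhs z) _) => j.
have cj : {for z, continuous (fun y : 'rV[K]_d => y 0 j - a)}.
  apply/differentiable_continuous/differentiableB; last exact: differentiable_cst.
  exact: differentiable_coord.
have zj : z 0 j - a != 0 by rewrite subr_eq0.
by apply: filterS (cvgr_neq0 _ cj zj) => y; rewrite subr_eq0.
Qed.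

Lemma eigenvalue_block_triangular (K : fieldType) d (A : 'M[K]_d) (c : 'cV[K]_d) (l e : K) :
  eigenvalue (block_mx A c 0 (const_mx l : 'M[K]_1)) e -> eigenvalue A e \/ e = l.
Proof.
move=> /eigenvalueP [v]; rewrite -[v]hsubmxK; move: (lsubmx v) (rsubmx v) => v1 v2.
rewrite mul_row_block mulmx0 addr0 scale_row_mx => /eq_row_mx [Ev1 Ev2] v0.
have [v10|nz_v1] := eqVneq v1 0; last by left; apply/eigenvalueP; exists v1.
right; move: v0 Ev2; rewrite v10 row_mx_eq0 eqxx mul0mx add0r /= => nz_v2.
move/(congr1 (fun M : 'M[K]_1 => M 0 0)); rewrite !mxE big_ord1 !mxE.
have nz_v2_00 : v2 0 0 != 0.
  by apply: contra nz_v2 => /eqP v2_0; apply/eqP/rowP => j; rewrite (ord1 j) v2_0 mxE.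
by move/eqP; rewrite mulrC -subr_eq0 -mulrBl mulf_eq0 (negPf nz_v2_00) orbF subr_eq0 => /eqP.
Qed.

Lemma prod_lt1 (K : numDomainType) n (x : 'I_n -> K) : (0 < n)%N ->
  (forall i, 0 <= x i < 1) -> \prod_(i < n) x i < 1.
Proof.
elim: n x => [//|[|n] IH] x _ x01; first by rewrite big_ord1; case/andP: (x01 ord0).
have [x0 x1] := andP (x01 ord_max).
rewrite big_ord_recr /= mulr_ilt1 //; last exact: IH.
by apply: prodr_ge0 => i _; case/andP: (x01 (widen_ord (leqnSn _) i)).
Qed.

Definition for_large {K : numDomainType} (P : K -> Prop) : Prop :=
  exists2 M : K, 0 <= M & forall a, M < `|a| -> P a.

Lemma for_large_iter (K : numDomainType) n (P : nat -> K -> Prop) :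
  (forall k, (k < n)%N -> for_large (P k)) ->
  for_large (fun a => forall k, (k < n)%N -> P k a).
Proof.
elim: n => [|n IH] HP; first by exists 0.
have [M1 M1_ge0 HM1] := IH (fun k kn => HP k (ltnW kn)).
have [M2 M2_ge0 HM2] := HP n (ltnSn n).
exists (M1 + M2) => [|a Ma k]; first exact: addr_ge0.
rewrite ltnS leq_eqVlt => /orP [/eqP ->|kn].
  by apply: HM2; apply: le_lt_trans Ma; rewrite lerDr.
by apply: HM1 => //; apply: le_lt_trans Ma; rewrite lerDl.
Qed.

Section Estimates.
Context {K : numFieldType}.

Lemma size_sub_monic (p q : {poly K}) n :
  p \is monic -> q \is monic -> size p = n.+1 -> size q = n.+1 -> (size (q - p)%R <= n)%N.
Proof.
move=> /monicP mp /monicP mq sp sq; apply/leq_sizeP => i.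
rewrite leq_eqVlt => /orP [/eqP <-|ni]; rewrite coefB.
  by move: mp mq; rewrite /lead_coef sp sq /= => -> ->; rewrite subrr.
by rewrite !nth_default ?subrr ?sp ?sq.
Qed.

Lemma horner_size_bound (r : {poly K}) d a : (size r <= d)%N -> 1 <= `|a| ->
  `|r.[a]| * `|a| <= (\sum_(i < d) `|r`_i|) * `|a| ^+ d.
Proof.
move=> sr a_ge1; rewrite (horner_coef_wide a sr) !mulr_suml.
apply: le_trans (ler_wpM2r (le_trans ler01 a_ge1) (ler_norm_sum _ _ _)) _.
rewrite mulr_suml; apply: ler_sum => i _.
rewrite normrM normrX -mulrA ler_wpM2l // -exprSr.
exact: ler_weXn2l.
Qed.

Lemma norm_prod_sub_ge d (w : 'I_d -> K) B a :
  (forall j, `|w j| <= B) -> 2 * B < `|a| ->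
  (`|a| / 2) ^+ d <= `|\prod_(j < d) (a - w j)|.
Proof.
move=> wB aB; rewrite normr_prod -[d in _ ^+ d]card_ord -prodr_const.
apply: ler_prod => j _.
have B_ge0 : 0 <= B := le_trans (normr_ge0 _) (wB j).
have a_gt0 : 0 < `|a| by apply: le_lt_trans aB; rewrite mulr_ge0.
rewrite divr_ge0 ?(ltW a_gt0) //=; apply: le_trans (lerB_dist a (w j)).
rewrite lerBrDr {2}(splitr `|a|) lerD2l ler_pdivlMr //.
by apply: le_trans (ltW aB); rewrite mulrC ler_pM2l.
Qed.

(* For p monic of degree d, p(a) / prod (a - w_j) tends to 1 as |a| grows: with
   r = prod (X - w_j) - p of degree < d, 1 - p(a)/prod (a - w_j) = r(a)/prod (a - w_j),
   and |r(a)| < |prod (a - w_j)| for large |a|. *)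
Lemma monic_multiplier_for_large d (p : {poly K}) (w : 'I_d -> K) :
  p \is monic -> size p = d.+1 ->
  for_large (fun a => (forall j, w j != a) /\ `|1 - p.[a] / \prod_(j < d) (a - w j)| < 1).
Proof.
move=> mp sp.
pose B := \sum_(j < d) `|w j|.
pose r := \prod_(j < d) ('X - (w j)%:P) - p.
have size_r : (size r <= d)%N.
  apply: size_sub_monic mp (monic_prod_XsubC _ _ _) sp _.
  by rewrite size_prod_XsubC /index_enum unlock -enumT -cardT card_ord.
pose C := \sum_(i < d) `|r`_i|.
have B_ge0 : 0 <= B by apply: sumr_ge0.
have C_ge0 : 0 <= C by apply: sumr_ge0.
have wB j : `|w j| <= B by rewrite /B (bigD1 j) //= lerDl sumr_ge0.
have C2_ge0 : 0 <= C * 2 ^+ d by rewrite mulr_ge0 // exprn_ge0.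
exists (2 * B + 1 + C * 2 ^+ d) => [|a Ma]; first by rewrite !addr_ge0 // mulr_ge0.
have aB : 2 * B < `|a| by apply: le_lt_trans Ma; rewrite -addrA lerDl addr_ge0.
have aC : C * 2 ^+ d < `|a| by apply: le_lt_trans Ma; rewrite lerDr addr_ge0 // mulr_ge0.
have a_ge1 : 1 <= `|a|.
  apply: ltW; apply: le_lt_trans Ma; by rewrite -addrA addrCA lerDl addr_ge0 // mulr_ge0.
have a_gt0 : 0 < `|a| := lt_le_trans ltr01 a_ge1.
split=> [j|].
  apply/eqP => wa; have := wB j; rewrite wa => /(lt_le_trans aB).
  by rewrite mulr_natl mulr2n -subr_lt0 addrK => /lt_le_trans /(_ B_ge0); rewrite ltxx.
set P := \prod_(j < d) (a - w j).
have P_ge : (`|a| / 2) ^+ d <= `|P| by exact: norm_prod_sub_ge.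
have r_le : `|r.[a]| * `|a| <= C * `|a| ^+ d by exact: horner_size_bound.
have key : C * `|a| ^+ d < `|a| * (`|a| / 2) ^+ d.
  have -> : `|a| ^+ d = 2 ^+ d * (`|a| / 2) ^+ d.
    by rewrite -exprMn mulrCA divff ?mulr1 // pnatr_eq0.
  by rewrite mulrA ltr_pM2r // exprn_gt0 // divr_gt0.
have r_lt_P : `|r.[a]| < `|P|.
  rewrite -(ltr_pM2r a_gt0) (le_lt_trans r_le) // (lt_le_trans key) //.
  by rewrite mulrC ler_pM2r.
have P_neq0 : P != 0 by rewrite -normr_gt0 (le_lt_trans _ r_lt_P).
have -> : 1 - p.[a] / P = r.[a] / P.
  rewrite /r hornerD hornerN horner_prod.
  by under eq_bigr do rewrite hornerXsubC; rewrite mulrBl divff.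
by rewrite normrM normfV ltr_pdivrMr ?normr_gt0 // mul1r.
Qed.
End Estimates.

Section Extension.
Context {K : numFieldType}.
Variables (p : {poly K}) (d : nat) (a : K).

Local Notation W := (@weierstrass K p d).
Local Notation Wt := (@weierstrass K (('X - a%:P) * p) (d + 1)).
Local Notation ext y t := (row_mx y (const_mx t : 'rV[K]_1)).

Lemma ext_lshift (y : 'rV[K]_d) t j : ext y t 0 (lshift 1 j) = y 0 j.
Proof. by rewrite row_mxEl. Qed.

Lemma ext_rshift (y : 'rV[K]_d) t r : ext y t 0 (rshift d r) = t.
Proof. by rewrite row_mxEr mxE. Qed.

Lemma offDiag_extP (y : 'rV[K]_d) t :
  offDiag (ext y t) <-> offDiag y /\ forall j, y 0 j != t.
Proof.
split=> [oyt|[oy yt] i j].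
  split=> [i j ij|j].
    by have := oyt (lshift 1 i) (lshift 1 j); rewrite eq_lshift !ext_lshift; apply.
  by have := oyt (lshift 1 j) (rshift d ord0); rewrite eq_lrshift ext_lshift ext_rshift; apply.
case: (split_ordP i) => i' ->; case: (split_ordP j) => j' ->.
- by rewrite eq_lshift !ext_lshift; exact: oy.
- by rewrite ext_lshift ext_rshift => _; exact: yt.
- by rewrite ext_lshift ext_rshift => _; rewrite eq_sym; exact: yt.
- by rewrite (ord1 i') (ord1 j') eqxx.
Qed.

Lemma prod_drop_lshift (F : 'I_(d + 1) -> K) j :
  \prod_(i < d + 1 | i != lshift 1 j) F i =
  (\prod_(i < d | i != j) F (lshift 1 i)) * F (rshift d ord0).
Proof.
rewrite big_split_ord big_ord1_cond eq_rlshift /=.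
by congr (_ * _); apply: eq_bigl => i; rewrite eq_lshift.
Qed.

Lemma prod_drop_last (F : 'I_(d + 1) -> K) :
  \prod_(i < d + 1 | i != rshift d ord0) F i = \prod_(i < d) F (lshift 1 i).
Proof.
rewrite big_split_ord big_ord1_cond eqxx /= mulr1.
by apply: eq_bigl => i; rewrite eq_lrshift.
Qed.

Lemma Wt_lshift (y : 'rV[K]_d) t j :
  Wt (ext y t) 0 (lshift 1 j) =
  y 0 j - (y 0 j - a) * p.[y 0 j] / ((\prod_(i < d | i != j) (y 0 j - y 0 i)) * (y 0 j - t)).
Proof.
rewrite mxE prod_drop_lshift !ext_lshift ext_rshift hornerM hornerXsubC.
by under eq_bigr => i _ do rewrite ext_lshift.
Qed.

Lemma Wt_last (y : 'rV[K]_d) t :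
  Wt (ext y t) 0 (rshift d ord0) = t - (t - a) * p.[t] / \prod_(i < d) (t - y 0 i).
Proof.
rewrite mxE prod_drop_last !ext_rshift hornerM hornerXsubC.
by under eq_bigr => i _ do rewrite ext_lshift.
Qed.

Lemma Wt_slice (y : 'rV[K]_d) : (forall j, y 0 j != a) -> Wt (ext y a) = ext (W y) a.
Proof.
move=> ya; apply/rowP => k; case: (split_ordP k) => j ->.
  rewrite Wt_lshift row_mxEl mxE; congr (_ - _).
  rewrite [_ * (y 0 j - a)]mulrC invfM mulrA [(y 0 j - a) * _]mulrC mulfK //.
  by rewrite subr_eq0.
by rewrite (ord1 j) Wt_last ext_rshift subrr !mul0r subr0.
Qed.

Lemma ext_shift_lshift (y : 'rV[K]_d) t h j :
  h *: (delta_mx 0 (lshift 1 j) : 'rV[K]_(d + 1)) + ext y t = ext (h *: delta_mx 0 j + y) t.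
Proof.
apply/rowP => k; case: (split_ordP k) => k' ->.
  by rewrite !(row_mxEl, row_mxEr, mxE) eq_lshift.
by rewrite !(row_mxEl, row_mxEr, mxE) eq_rlshift /= mulr0 add0r.
Qed.

Lemma ext_shift_last (y : 'rV[K]_d) t h :
  h *: (delta_mx 0 (rshift d ord0) : 'rV[K]_(d + 1)) + ext y t = ext y (h *: 1 + t).
Proof.
apply/rowP => k; case: (split_ordP k) => k' ->.
  by rewrite !(row_mxEl, row_mxEr, mxE) eq_lrshift /= mulr0 add0r.
rewrite !(row_mxEl, row_mxEr, mxE) (ord1 k') eqxx /=.
have -> : h%:A = h by rewrite /GRing.scale /= mulr1.
have -> : (rshift d (0 : 'I_1) == rshift d ord0) = true by apply/eqP; congr rshift; apply/val_inj.
by rewrite mulr1.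
Qed.

Section BlockForm.
Variable z : 'rV[K]_d.
Hypothesis oza : offDiag (ext z a).

Let oz : offDiag z. Proof. by have [] := (offDiag_extP z a).1 oza. Qed.
Let za : forall j, z 0 j != a. Proof. by have [] := (offDiag_extP z a).1 oza. Qed.

Lemma jacobi_Wt_slice i j :
  jacobi Wt (ext z a) i (lshift 1 j) = 'D_(delta_mx 0 j) (fun y => ext (W y) a 0 i) z.
Proof.
rewrite jacobi_entry; last exact: differentiable_weierstrass.
rewrite (@derive_transfer _ _ _ _ _ (fun y => Wt (ext y a) 0 i) _ z _ (delta_mx 0 j)); last first.
  by move=> h; rewrite ext_shift_lshift.
apply: near_eq_derive; apply: filterS (near_avoid za) => y ya.
by rewrite Wt_slice.
Qed.

Lemma jacobi_Wt_last :
  jacobi Wt (ext z a) (rshift d ord0) (rshift d ord0) = 1 - p.[a] / \prod_(j < d) (a - z 0 j).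
Proof.
rewrite jacobi_entry; last exact: differentiable_weierstrass.
rewrite (@derive_transfer _ _ _ _ _ (fun t => Wt (ext z t) 0 (rshift d ord0)) _ a _ 1); last first.
  by move=> h; rewrite ext_shift_last.
under eq_fun do rewrite Wt_last -mulrA.
apply: derive_vanishing_factor; apply: differentiableM; first exact: differentiable_horner.
apply: differentiableV.
  by apply: differentiable_prod => k _; apply: differentiableB.
by rewrite prodf_seq_neq0; apply/allP => k _; rewrite subr_eq0 eq_sym za.
Qed.

Lemma jacobi_Wt_block : exists c : 'cV[K]_d,
  jacobi Wt (ext z a) =
  block_mx (jacobi W z) c 0 (const_mx (1 - p.[a] / \prod_(j < d) (a - z 0 j))).
Proof.
exists (\col_k jacobi Wt (ext z a) (lshift 1 k) (rshift d ord0)).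
apply/matrixP => i j.
case: (split_ordP i) => i' ->; case: (split_ordP j) => j' ->.
- rewrite block_mxEul jacobi_Wt_slice jacobi_entry; last exact: differentiable_weierstrass.
  by under eq_fun do rewrite ext_lshift.
- by rewrite block_mxEur [RHS]mxE (ord1 j').
- rewrite block_mxEdl [RHS]mxE jacobi_Wt_slice.
  by under eq_fun do rewrite ext_rshift; rewrite derive_cst.
- by rewrite block_mxEdr [RHS]mxE (ord1 i') (ord1 j') jacobi_Wt_last.
Qed.

End BlockForm.

Definition multiplier (y : 'rV[K]_d) : K := 1 - p.[a] / \prod_(j < d) (a - y 0 j).

Section Orbit.
Variables (q : 'rV[K]_d) (n : nat).
Hypothesis orbit_ext : forall k, (k < n)%N -> offDiag (ext (iter k W q) a).

Lemma iter_Wt_ext k : (k <= n)%N -> iter k Wt (ext q a) = ext (iter k W q) a.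
Proof.
elim: k => [//|k IH] Sk; rewrite iterS IH ?(ltnW Sk) // Wt_slice //.
by have [] := (offDiag_extP _ a).1 (orbit_ext _ Sk).
Qed.

Lemma jacobi_iter_Wt_block k : (k <= n)%N ->
  [/\ differentiable (iter k Wt) (ext q a), differentiable (iter k W) q &
    exists c : 'cV[K]_d, jacobi (iter k Wt) (ext q a) =
      block_mx (jacobi (iter k W) q) c 0
               (const_mx (\prod_(i < k) multiplier (iter i W q)))].
Proof.
elim: k => [|k IH] Sk.
  split; [exact: ex_diff|exact: ex_diff|exists 0].
  rewrite /= !jacobi_id big_ord0 (scalar_mx_block d 1); congr block_mx.
  by apply/matrixP => i j; rewrite !mxE (ord1 i) (ord1 j).
have [dWtk dWk [c Hc]] := IH (ltnW Sk).
have oka := orbit_ext _ Sk; have [ok _] := (offDiag_extP _ a).1 oka.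
have dWt : differentiable Wt (iter k Wt (ext q a)).
  by rewrite iter_Wt_ext ?(ltnW Sk) //; exact: differentiable_weierstrass.
have dW : differentiable W (iter k W q) by exact: differentiable_weierstrass.
have [c1 Hc1] := jacobi_Wt_block _ oka.
split; [exact: (differentiable_comp dWtk dWt)|exact: (differentiable_comp dWk dW)|].
exists (jacobi W (iter k W q) *m c + c1 *m const_mx (\prod_(i < k) multiplier (iter i W q))).
rewrite (_ : iter k.+1 Wt = Wt \o iter k Wt) // (_ : iter k.+1 W = W \o iter k W) //.
rewrite !jacobi_comp // Hc iter_Wt_ext ?(ltnW Sk) // Hc1 mulmx_block.
rewrite !mul0mx !mulmx0 !add0r !addr0 big_ord_recr /= [_ * multiplier _]mulrC.
by congr block_mx; apply/matrixP => i j; rewrite !mxE big_ord1 !mxE.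
Qed.

End Orbit.

Lemma attracting_cycle_persists (q : 'rV[K]_d) n :
  periodic_point W q n -> attracting (jacobi (iter n W) q) ->
  (forall k, (k < n)%N -> (forall j, iter k W q 0 j != a) /\ `|multiplier (iter k W q)| < 1) ->
  periodic_point Wt (ext q a) n /\ attracting (jacobi (iter n Wt) (ext q a)).
Proof.
move=> [n_gt0 orbit_od qn q_min] att small.
have orbit_ext k : (k < n)%N -> offDiag (ext (iter k W q) a).
  by move=> kn; apply/offDiag_extP; split; [exact: orbit_od|exact: (small k kn).1].
have iterE := @iter_Wt_ext q n orbit_ext.
split; first split=> //.
- by move=> k kn; rewrite iterE; [exact: orbit_ext|exact: ltnW].
- by rewrite iterE // qn.
- move=> k /andP [k_gt0 kn]; rewrite iterE; last exact: ltnW.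
  apply/eqP => /eq_row_mx [iter_q _].
  by have := q_min k; rewrite k_gt0 kn iter_q eqxx => /(_ isT).
have [_ _ [c ->]] := @jacobi_iter_Wt_block q n orbit_ext n (leqnn n).
move=> e /eigenvalue_block_triangular [/att //|->].
rewrite normr_prod; apply: prod_lt1 => // i.
by rewrite normr_ge0 (small i (ltn_ord i)).2.
Qed.
End Extension.

Local Open Scope complex_scope.

Theorem lemma3p6 (R : realType) (d : nat) (p : {poly R[i]}) :
  p \is monic -> size p = d.+1 ->
  (* (1) block form of the Jacobi matrix of W_{(Z - alpha) p} *)
  (forall (z : 'rV[R[i]]_d) (alpha : R[i]),
     offDiag (row_mx z (const_mx alpha : 'rV_1)) ->
     exists c : 'cV[R[i]]_d,
       jacobi (weierstrass (d := (d + 1)%N) (('X - alpha%:P) * p))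
              (row_mx z (const_mx alpha))
       = block_mx (jacobi (weierstrass (d := d) p) z) c 0
           (const_mx (1 - p.[alpha] / \prod_(j < d) (alpha - z 0 j)))) /\
  (* (2) attracting cycles persist for |alpha| large *)
  (forall (q : 'rV[R[i]]_d) (n : nat),
     periodic_point (weierstrass (d := d) p) q n ->
     attracting (jacobi (iter n (weierstrass (d := d) p)) q) ->
     exists M : R, forall alpha : R[i], M%:C < `|alpha| ->
       periodic_point (weierstrass (d := (d + 1)%N) (('X - alpha%:P) * p))
                      (row_mx q (const_mx alpha)) n /\
       attracting (jacobi (iter n (weierstrass (d := (d + 1)%N) (('X - alpha%:P) * p)))
                          (row_mx q (const_mx alpha)))).
Proof.
move=> mp sp; split=> [z alpha oza|q n pp att]; first exact: jacobi_Wt_block.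
pose W := @weierstrass _ p d.
have [M M_ge0 large] := @for_large_iter _ n
  (fun k a => (forall j, iter k W q 0 j != a) /\
              `|1 - p.[a] / \prod_(j < d) (a - iter k W q 0 j)| < 1)
  (fun k _ => @monic_multiplier_for_large _ d p (fun j => iter k W q 0 j) mp sp).
exists (complex.Re M) => alpha; rewrite (RRe_real (ger0_real M_ge0)) => /large small.
exact: (@attracting_cycle_persists _ p d alpha q n pp att small).
Qed.
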